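(* Let $(X,d,\mu)$ be an unbounded space of homogeneous type with geometric constants $\tau$ and $A$, let $0<\gamma<\tfrac1\tau$, $H\geq1$, and let $\mathcal{K}$ be a family of symmetric Markov kernels on $X$ with $\mathcal{K}\subset\mathcal{H}(\gamma,H)$. Then $\sup_{K\in\mathcal{K},\,x\in X}K(x,x)\mu(\{x\})\leq1$.
   Context: A quasi-distance on $X$ is a nonnegative symmetric function $d$ vanishing exactly on the diagonal with $d(x,z)\leq\tau[d(x,y)+d(y,z)]$, $\tau\geq1$; balls are $B(x,r)=\{y:d(x,y)<r\}$. $(X,d,\mu)$ is a space of homogeneous type if $\mu$ is a positive measure on a $\sigma$-algebra containing all balls with $0<\mu(B(x,2r))\leq A\mu(B(x,r))<\infty$; unbounded means $\mu(X)=\infty$. A symmetric Markov kernel is a nonnegative symmetric measurable $K$ on $X\times X$ with $\int_XK(x,y)d\mu(y)=1$ for all $x$. $K\in\mathcal{H}(\gamma,H)$ means $\sup_{\eta\in B(y,\gamma d(x,y))}K(x,\eta)\leq H\inf_{\eta\in B(y,\gamma d(x,y))}K(x,\eta)$ for all $x\neq y$. *)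

From HB Require Import structures.
From mathcomp Require Import all_boot all_order all_algebra.
From mathcomp Require Import all_classical all_reals all_analysis.
Set Implicit Arguments. Unset Strict Implicit. Unset Printing Implicit Defensive.
Import Order.TTheory GRing.Theory Num.Theory.
Local Open Scope classical_set_scope.
Local Open Scope ring_scope.

Definition quasi_distance (R : realType) (X : Type) (dist : X -> X -> R) (tau : R) :=
  [/\ 1 <= tau,
      (forall x y, 0 <= dist x y),
      (forall x y, dist x y = dist y x),
      (forall x y, dist x y = 0 <-> x = y) &
      (forall x y z, dist x z <= tau * (dist x y + dist y z))].

Definition qball (R : realType) (X : Type) (dist : X -> X -> R) (x : X) (r : R)
  : set X := [set y | dist x y < r].

Definition homogeneous_type (d : measure_display) (R : realType)
  (X : measurableType d) (dist : X -> X -> R) (mu : {measure set X -> \bar R})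
  (tau A : R) :=
  [/\ quasi_distance dist tau,
      (forall x r, measurable (qball dist x r)) &
      (forall x r, 0 < r ->
         (0 < mu (qball dist x (2 * r)))%E /\
         (mu (qball dist x (2 * r)) <= A%:E * mu (qball dist x r))%E /\
         (mu (qball dist x r) < +oo)%E)].

Definition unbounded_space (d : measure_display) (R : realType)
  (X : measurableType d) (mu : {measure set X -> \bar R}) := mu setT = +oo%E.

Definition sym_markov_kernel (d : measure_display) (R : realType)
  (X : measurableType d) (mu : {measure set X -> \bar R}) (K : X -> X -> R) :=
  [/\ (forall x y, 0 <= K x y),
      (forall x y, K x y = K y x),
      measurable_fun setT (fun p : X * X => K p.1 p.2) &
      (forall x, (\int[mu]_y (K x y)%:E = 1)%E)].

Definition kernel_class_H (R : realType) (X : Type) (dist : X -> X -> R)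
  (gamma H : R) (K : X -> X -> R) :=
  forall x y, x <> y ->
    (ereal_sup [set (K x e)%:E | e in qball dist y (gamma * dist x y)]
     <= H%:E * ereal_inf [set (K x e)%:E | e in qball dist y (gamma * dist x y)])%E.

From HB Require Import structures.
From mathcomp Require Import all_boot all_order all_algebra.
From mathcomp Require Import all_classical all_reals all_analysis.
From mathcomp Require Import measurable_realfun.
Set Implicit Arguments. Unset Strict Implicit. Unset Printing Implicit Defensive.
Import Order.TTheory GRing.Theory Num.Theory.
Local Open Scope classical_set_scope.
Local Open Scope ring_scope.

(* Singletons are countable intersections of balls, hence measurable; and
   K(x,x) mu{x} is the integral of the nonnegative function K(x,.) over {x},
   which is at most its integral over X, that is 1. *)

Lemma set1_bigcap_qball (R : realType) (X : Type) (dist : X -> X -> R)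
    (tau : R) (x : X) :
  quasi_distance dist tau -> [set x] = \bigcap_n qball dist x n.+1%:R^-1.
Proof.
move=> [_ dist_ge0 _ dist_eq0 _]; apply/seteqP; split=> y.
  by move=> -> n _; rewrite /qball /= (proj2 (dist_eq0 x x) erefl) invr_gt0.
move=> y_in_balls; apply/esym/dist_eq0/eqP; rewrite eq_le dist_ge0 andbT.
rewrite leNgt; apply/negP => /ltr_add_invr[n]; rewrite add0r => lt_n.
by have := y_in_balls n I; rewrite /qball /= ltNge (ltW lt_n).
Qed.

Lemma measurable_set1_qball (d : measure_display) (R : realType)
    (X : measurableType d) (dist : X -> X -> R) (tau : R) (x : X) :
  quasi_distance dist tau -> (forall y r, measurable (qball dist y r)) ->
  measurable [set x].
Proof.
move=> qd mball; rewrite (set1_bigcap_qball x qd).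
by apply: bigcapT_measurable => n; exact: mball.
Qed.

Lemma ge0_integral_ge_set1 (d : measure_display) (R : realType)
    (X : measurableType d) (mu : {measure set X -> \bar R}) (f : X -> R)
    (x : X) :
  measurable [set x] -> measurable_fun setT f -> (forall y, 0 <= f y) ->
  ((f x)%:E * mu [set x] <= \int[mu]_y (f y)%:E)%E.
Proof.
move=> mx mf f_ge0; rewrite -integral_cst //.
rewrite (@eq_integral _ _ _ _ _ (fun y => (f y)%:E)); last first.
  by move=> y; rewrite inE /= => ->.
apply: ge0_subset_integral => //; first exact/measurable_EFinP.
by move=> y _; rewrite lee_fin.
Qed.

Lemma sym_markov_kernel_diag_le1 (d : measure_display) (R : realType)
    (X : measurableType d) (mu : {measure set X -> \bar R}) (K : X -> X -> R)
    (x : X) :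
  sym_markov_kernel mu K -> measurable [set x] ->
  ((K x x)%:E * mu [set x] <= 1)%E.
Proof.
move=> [K_ge0 _ mK K_int1] mx; rewrite -(K_int1 x).
apply: ge0_integral_ge_set1 => //.
exact: measurableT_comp mK (pair1_measurable x).
Qed.

Theorem lemma4p3 (d : measure_display) (R : realType) (X : measurableType d)
  (dist : X -> X -> R) (mu : {measure set X -> \bar R}) (tau A : R)
  (gamma H : R) (Kfam : set (X -> X -> R)) :
  homogeneous_type dist mu tau A ->
  unbounded_space mu ->
  0 < gamma -> gamma < tau^-1 -> 1 <= H ->
  (forall K, Kfam K -> sym_markov_kernel mu K) ->
  (forall K, Kfam K -> kernel_class_H dist gamma H K) ->
  (ereal_sup [set ((K x x)%:E * mu [set x])%E | K in Kfam & x in setT] <= 1)%E.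
Proof.
move=> [qd mball _] _ _ _ _ markov _.
apply: ge_ereal_sup => _ [K KK [x _ <-]].
apply: sym_markov_kernel_diag_le1; first exact: markov.
exact: measurable_set1_qball qd mball.
Qed.
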